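(* $\mathsf{sjfCQ}(\mathsf{TI}_{\mathsf{fin}})=\mathsf{CQ}(\mathsf{TI}_{\mathsf{fin}})=\mathsf{UCQ}(\mathsf{TI}_{\mathsf{fin}})$.
   Context: Fix a countably infinite universe $U$. A database schema is a finite nonempty set of relation symbols with arities; facts are $R(u_1,\dots,u_{\mathrm{ar}(R)})$ with $u_i\in U$; an instance is a finite set of facts; $\mathrm{adom}(D)$ is the set of elements of $U$ occurring in $D$. A probabilistic database (PDB) is a discrete probability space $(\mathbb D,P)$ with $\mathbb D$ a nonempty countable set of instances; it is finite if $\mathbb D$ is finite. A PDB is tuple-independent if for all pairwise distinct facts $f_1,\dots,f_k$, $\Pr(f_1\in I,\dots,f_k\in I)=\prod_i\Pr(f_i\in I)$; $\mathsf{TI}_{\mathsf{fin}}$ is the class of finite tuple-independent PDBs. Formulas use relational atoms $R(\bar u)$ ($\bar u$ variables or constants) and equality atoms and are evaluated under active domain semantics. A conjunctive query (CQ) is built from atoms using only $\exists,\wedge$; it is self-join free (sjfCQ) if each relation symbol occurs at most once; a union of conjunctive queries (UCQ) is built using only $\exists,\wedge,\vee$. An $\mathsf L$-view consists of one $\mathsf L$-formula $\Phi_R(x_1,\dots,x_{\mathrm{ar}(R)})$ per output relation $R$, mapping $D$ to the instance of all $R(\bar a)$ with $\bar a$ over $\mathrm{adom}(D)\cup\mathrm{adom}(\Phi_R)$ and $D\models\Phi_R[\bar a]$. The image of a PDB $(\mathbb D,P)$ under a view $V$ is the PDB on $V(\mathbb D)$ with $P'(\{D'\})=P(\{D:V(D)=D'\})$;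 $\mathsf L(\mathsf{TI}_{\mathsf{fin}})$ is the class of images of finite TI-PDBs under $\mathsf L$-views. *)

From HB Require Import structures.
From mathcomp Require Import all_boot all_order all_algebra.
From mathcomp Require Import finmap.
From mathcomp Require Import reals.

Set Implicit Arguments.
Unset Strict Implicit.
Unset Printing Implicit Defensive.

Import GRing.Theory Num.Theory.
Local Open Scope fset_scope.

(* The countably infinite universe U is taken to be nat. *)
Definition univ := nat.

(* A relation symbol is a pair (name, arity). *)
Definition rel := (nat * nat)%type.
Definition arity (r : rel) : nat := r.2.

Definition fact := (rel * seq univ)%type.

Definition instance := {fset fact}.

Definition schema := {fset rel}.

Definition fact_over (tau : schema) (f : fact) : bool :=
  (f.1 \in tau) && (size f.2 == arity f.1).

Definition instance_over (tau : schema) (I : instance) : bool :=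
  all (fact_over tau) I.

Definition adom (I : instance) : seq univ := flatten [seq f.2 | f <- I].

Inductive term := Var of nat | Const of univ.

Inductive formula :=
| Atom of rel & seq term
| Equal of term & term
| Exists of nat & formula
| And of formula & formula
| Or of formula & formula.

Definition term_const (t : term) : seq univ :=
  match t with Var _ => [::] | Const c => [:: c] end.

Definition term_var (t : term) : seq nat :=
  match t with Var x => [:: x] | Const _ => [::] end.

Fixpoint consts (phi : formula) : seq univ :=
  match phi with
  | Atom _ ts => flatten (map term_const ts)
  | Equal t1 t2 => term_const t1 ++ term_const t2
  | Exists _ p => consts p
  | And p q => consts p ++ consts q
  | Or p q => consts p ++ consts q
  end.

Fixpoint fv (phi : formula) : seq nat :=
  match phi with
  | Atom _ ts => flatten (map term_var ts)
  | Equal t1 t2 => term_var t1 ++ term_var t2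
  | Exists x p => filter (predC1 x) (fv p)
  | And p q => fv p ++ fv q
  | Or p q => fv p ++ fv q
  end.

Fixpoint atom_rels (phi : formula) : seq rel :=
  match phi with
  | Atom r _ => [:: r]
  | Equal _ _ => [::]
  | Exists _ p => atom_rels p
  | And p q => atom_rels p ++ atom_rels q
  | Or p q => atom_rels p ++ atom_rels q
  end.

Fixpoint has_or (phi : formula) : bool :=
  match phi with
  | Atom _ _ | Equal _ _ => false
  | Exists _ p => has_or p
  | And p q => has_or p || has_or q
  | Or _ _ => true
  end.

Fixpoint wt (tau : schema) (phi : formula) : bool :=
  match phi with
  | Atom r ts => (r \in tau) && (size ts == arity r)
  | Equal _ _ => true
  | Exists _ p => wt tau p
  | And p q => wt tau p && wt tau q
  | Or p q => wt tau p && wt tau q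
  end.

Definition teval (nu : nat -> univ) (t : term) : univ :=
  match t with Var x => nu x | Const c => c end.

Definition upd (nu : nat -> univ) (x : nat) (a : univ) : nat -> univ :=
  fun y => if y == x then a else nu y.

(* Active-domain semantics: quantifiers range over the domain A. *)
Fixpoint eval (I : instance) (A : seq univ) (nu : nat -> univ)
    (phi : formula) : bool :=
  match phi with
  | Atom r ts => (r, map (teval nu) ts) \in I
  | Equal t1 t2 => teval nu t1 == teval nu t2
  | Exists x p => has (fun a => eval I A (upd nu x a) p) A
  | And p q => eval I A nu p && eval I A nu q
  | Or p q => eval I A nu p || eval I A nu q
  end.

Inductive lang := SJFCQ | CQ | UCQ.

Definition in_lang (L : lang) (phi : formula) : bool :=
  match L with
  | SJFCQ => ~~ has_or phi && uniq (atom_rels phi)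
  | CQ => ~~ has_or phi
  | UCQ => true
  end.

(* A view: output schema, and for each output relation R a formula
   Phi_R(x_1,...,x_ar(R)) given by its list of (distinct) free-variable
   slots and its body. *)
Record view := View {
  out_schema : schema;
  vdef : rel -> (seq nat * formula)
}.

Definition view_ok (L : lang) (tau : schema) (V : view) : bool :=
  (out_schema V != fset0) &&
  all (fun R =>
         let: (xs, phi) := vdef V R in
         [&& size xs == arity R, uniq xs, all (fun y => y \in xs) (fv phi),
             wt tau phi & in_lang L phi])
      (out_schema V).

Fixpoint tuples (k : nat) (A : seq univ) : seq (seq univ) :=
  match k with
  | 0 => [:: [::]]
  | k'.+1 => [seq a :: t | a <- A, t <- tuples k' A]
  end.

Definition assign (xs : seq nat) (a : seq univ) : nat -> univ :=
  fun y => nth 0 a (index y xs).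

Definition sat_def (I : instance) (xs : seq nat) (phi : formula)
    (a : seq univ) : bool :=
  eval I (adom I ++ consts phi) (assign xs a) phi.

Definition view_app (V : view) (I : instance) : instance :=
  seq_fset tt
    (flatten [seq let: (xs, phi) := vdef V R in
                  [seq (R, a) | a <- tuples (arity R) (adom I ++ consts phi)
                              & sat_def I xs phi a]
             | R <- out_schema V]).

(* A (finite) probabilistic database: schema, finite nonempty sample space
   of instances, and point probabilities P({D}) for D in the sample space. *)
Record pdb (R : realType) := PDB {
  psch : schema;
  pdom : {fset instance};
  pprob : instance -> R
}.

Section PDB.
Variable R : realType.
Local Open Scope ring_scope.

Definition pdb_ok (Q : pdb R) : bool :=
  [&& psch Q != fset0, pdom Q != fset0,
      all (instance_over (psch Q)) (pdom Q),
      all (fun I => 0 <= pprob Q I) (pdom Q) &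
      \sum_(I <- pdom Q) pprob Q I == 1].

Definition prob_all (Q : pdb R) (F : {fset fact}) : R :=
  \sum_(I <- pdom Q | F `<=` I) pprob Q I.

Definition tuple_independent (Q : pdb R) : Prop :=
  forall F : {fset fact},
    prob_all Q F = \prod_(f <- F) prob_all Q [fset f].

Definition TIfin (Q : pdb R) : Prop := pdb_ok Q /\ tuple_independent Q.

Definition image (V : view) (Q : pdb R) : pdb R :=
  PDB (out_schema V) [fset view_app V I | I in pdom Q]
      (fun J => \sum_(I <- pdom Q | view_app V I == J) pprob Q I).

Definition pdb_eq (Q1 Q2 : pdb R) : Prop :=
  [/\ psch Q1 = psch Q2, pdom Q1 = pdom Q2 &
      forall I, I \in pdom Q1 -> pprob Q1 I = pprob Q2 I].

Definition in_L_TIfin (L : lang) (Q : pdb R) : Prop :=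
  exists (T : pdb R) (V : view),
    TIfin T /\ view_ok L (psch T) V /\ pdb_eq (image V T) Q.

End PDB.

From Pilot Require Import Defs.
From mathcomp Require Import all_boot all_order all_algebra finmap reals.

Set Implicit Arguments.
Unset Strict Implicit.
Unset Printing Implicit Defensive.

Import GRing.Theory Num.Theory.

(* sjfCQ <= CQ <= UCQ syntactically, so it suffices to present the image V(T)
   of a finite TI-PDB T under a positive existential view V as an sjfCQ image.
   Let f_1, ..., f_k be the facts occurring in T and chi_C in {0,1}^k the
   indicator vector of a world C.  Encode a world X of T as the instance with
   the deterministic facts S_f(0) and M_R(a, chi_C) for every world C and
   every a in V(C), together with S_f(1) for f in X.  Since X |-> encoding
   merely renames facts and adds certain ones, the encoded PDB is again
   tuple-independent.  The self-join-free query
   exists z, M_R(x, z) /\ S_f1(z_1) /\ ... /\ S_fk(z_k)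
   holds of a in the encoding of X iff a in V(C) for some world C included
   in X, i.e. (by monotonicity of positive queries) iff a in V(X). *)

Lemma mem_tuples k A t : (t \in tuples k A) = (size t == k) && all (mem A) t.
Proof.
elim: k t => [|k IH] [|a t] //=.
- by apply/allpairsP => -[[x y] /= [_ _]].
- rewrite eqSS; apply/allpairsP/idP => [[[x y] /= [xA yt [-> ->]]]|].
    by move: yt; rewrite IH xA => /andP[-> ->].
  by case/and3P => sz aA tA; exists (a, t); rewrite /= IH sz aA tA.
Qed.

Lemma adomP (I : instance) u :
  reflect (exists2 f, f \in I & u \in f.2) (u \in adom I).
Proof.
apply: (iffP flattenP) => [[s /mapP[f fI ->] uf]|[f fI uf]]; first by exists f.
by exists f.2 => //; apply/mapP; exists f.
Qed.

Lemma sub_eval (I J : instance) (A B : seq univ) nu phi :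
  {subset I <= J} -> {subset A <= B} -> eval I A nu phi -> eval J B nu phi.
Proof.
move=> IJ AB; elim: phi nu => [r ts|t1 t2|x p IH|p IHp q IHq|p IHp q IHq] nu //=.
- exact: IJ.
- by case/hasP => a aA h; apply/hasP; exists a; [exact: AB | exact: IH].
- by case/andP => /IHp -> /IHq ->.
- by case/orP => [/IHp ->|/IHq ->]; rewrite ?orbT.
Qed.

Lemma eq_eval (I : instance) A nu1 nu2 phi :
  nu1 =1 nu2 -> eval I A nu1 phi = eval I A nu2 phi.
Proof.
have eq_teval nu nu' : nu =1 nu' -> teval nu =1 teval nu' by move=> e [x|c] /=.
elim: phi nu1 nu2 => [r ts|t1 t2|x p IH|p IHp q IHq|p IHp q IHq] nu1 nu2 e /=.
- by rewrite (eq_map (eq_teval _ _ e)).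
- by rewrite !(eq_teval _ _ e).
- by apply: eq_has => a; apply: IH => y; rewrite /upd e.
- by rewrite (IHp _ nu2) // (IHq _ nu2).
- by rewrite (IHp _ nu2) // (IHq _ nu2).
Qed.

Lemma mem_view_app V I g :
  (g \in view_app V I) =
  (g.1 \in out_schema V) &&
  (let: (xs, phi) := vdef V g.1 in
   (g.2 \in tuples (arity g.1) (adom I ++ consts phi)) && sat_def I xs phi g.2).
Proof.
rewrite /view_app seq_fsetE; apply/flattenP/idP.
- case=> s /mapP[R RV ->]; case E: (vdef V R) => [xs phi].
  by case/mapP => a; rewrite mem_filter => /andP[sa ta] ->; rewrite /= RV E ta sa.
- case: g => R a /= /andP[RV]; case E: (vdef V R) => [xs phi] /andP[ta sa].
  eexists; first by apply/mapP; exists R.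
  by rewrite E; apply/mapP; exists a; rewrite // mem_filter sa.
Qed.

Lemma size_view_app V I g : g \in view_app V I -> size g.2 = arity g.1.
Proof.
rewrite mem_view_app => /andP[_]; case: (vdef V g.1) => xs phi.
by rewrite mem_tuples => /andP[/andP[/eqP]].
Qed.

Lemma sub_view_app V (C I : instance) :
  {subset C <= I} -> {subset view_app V C <= view_app V I}.
Proof.
move=> CI g; rewrite !mem_view_app => /andP[-> /=]; case: (vdef V g.1) => xs phi.
have sub : {subset adom C ++ consts phi <= adom I ++ consts phi}.
  move=> u; rewrite !mem_cat => /orP[/adomP[f /CI fI uf]|->]; last by rewrite orbT.
  by apply/orP; left; apply/adomP; exists f.
rewrite !mem_tuples => /andP[/andP[-> /allP tA] sa] /=.
by rewrite /sat_def (sub_eval CI sub sa) andbT; apply/allP => u /tA /sub.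
Qed.

Fixpoint upds (nu : nat -> univ) (xs : seq nat) (ws : seq univ) : nat -> univ :=
  if (xs, ws) is (x :: xs', w :: ws') then upds (upd nu x w) xs' ws' else nu.

Lemma eval_foldr_Exists I A nu xs p :
  eval I A nu (foldr Exists p xs) <->
  exists ws, [/\ size ws = size xs, all (mem A) ws & eval I A (upds nu xs ws) p].
Proof.
elim: xs nu => [|x xs IH] nu /=.
  by split => [ev|[[|w ws] [] //]]; exists [::].
split=> [/hasP[a aA /IH[ws [sz wsA ev]]]|[[|w ws] [] //= [sz] /andP[wA wsA] ev]].
  by exists (a :: ws); rewrite /= sz aA wsA.
by apply/hasP; exists w => //; apply/IH; exists ws.
Qed.

Lemma upds_val nu xs ws y : uniq xs -> size ws = size xs ->
  upds nu xs ws y = if y \in xs then nth 0 ws (index y xs) else nu y.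
Proof.
elim: xs ws nu => [|x xs IH] [|w ws] nu //= /andP[xxs uxs] [sz].
rewrite IH // in_cons /upd; have [->|neq] := eqVneq y x; first by rewrite (negbTE xxs).
by case: ifP.
Qed.

Lemma index_iota_addn n k i : i < k -> index (n + i) (iota n k) = i.
Proof. by move=> ik; rewrite -{1}(nth_iota 0 n ik) index_uniq ?size_iota ?iota_uniq. Qed.

Lemma assign_iota (a : seq univ) : assign (iota 0 (size a)) a =1 nth 0 a.
Proof.
move=> y; rewrite /assign; case: (ltnP y (size a)) => ya.
  by rewrite -[y]add0n index_iota_addn.
rewrite memNindex ?size_iota ?nth_default //.
by rewrite mem_iota add0n ltnNge ya.
Qed.

Lemma upds_iota_assign (a z : seq univ) :
  upds (assign (iota 0 (size a)) a) (iota (size a) (size z)) z =1 nth 0 (a ++ z).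
Proof.
move=> y; rewrite upds_val ?iota_uniq ?size_iota // assign_iota nth_cat mem_iota.
case: (ltnP y (size a)) => [_|ay] /=; first by [].
rewrite -(subnKC ay) ltn_add2l addKn; case: ltnP => [yz|zy].
  by rewrite index_iota_addn.
by rewrite !nth_default ?leq_addr.
Qed.

Lemma eval_foldr_And I A nu ps p :
  eval I A nu (foldr And p ps) = all (eval I A nu) ps && eval I A nu p.
Proof. by elim: ps => //= q ps ->; rewrite andbA. Qed.

Lemma wt_foldr_And tau ps p : wt tau (foldr And p ps) = all (wt tau) ps && wt tau p.
Proof. by elim: ps => //= q ps ->; rewrite andbA. Qed.

Lemma has_or_foldr_And ps p : has_or (foldr And p ps) = has has_or ps || has_or p.
Proof. by elim: ps => //= q ps ->; rewrite orbA. Qed.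

Lemma atom_rels_foldr_And ps p :
  atom_rels (foldr And p ps) = flatten (map atom_rels ps) ++ atom_rels p.
Proof. by elim: ps => //= q ps ->; rewrite catA. Qed.

Lemma fv_foldr_And ps p : fv (foldr And p ps) = flatten (map fv ps) ++ fv p.
Proof. by elim: ps => //= q ps ->; rewrite catA. Qed.

Lemma consts_foldr_And ps p :
  consts (foldr And p ps) = flatten (map consts ps) ++ consts p.
Proof. by elim: ps => //= q ps ->; rewrite catA. Qed.

Lemma wt_foldr_Exists tau xs p : wt tau (foldr Exists p xs) = wt tau p.
Proof. by elim: xs. Qed.

Lemma has_or_foldr_Exists xs p : has_or (foldr Exists p xs) = has_or p.
Proof. by elim: xs. Qed.

Lemma atom_rels_foldr_Exists xs p : atom_rels (foldr Exists p xs) = atom_rels p.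
Proof. by elim: xs. Qed.

Lemma consts_foldr_Exists xs p : consts (foldr Exists p xs) = consts p.
Proof. by elim: xs. Qed.

Lemma fv_foldr_Exists xs p : fv (foldr Exists p xs) = [seq y <- fv p | y \notin xs].
Proof.
elim: xs => /= [|x xs ->]; first by rewrite filter_predT.
by rewrite -filter_predI; apply: eq_filter => y; rewrite /= in_cons negb_or.
Qed.

Section PushForward.
Variable R : realType.
Local Open Scope ring_scope.
Local Open Scope fset_scope.
Implicit Types (Q : pdb R) (s : schema) (e : instance -> instance).

Definition push s e Q : pdb R :=
  PDB s [fset e I | I in pdom Q] (fun J => \sum_(I <- pdom Q | e I == J) pprob Q I).

Lemma sum_push s e Q (P : pred instance) :
  \sum_(J <- pdom (push s e Q) | P J) pprob (push s e Q) J =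
  \sum_(I <- pdom Q | P (e I)) pprob Q I.
Proof.
rewrite /= big_mkcond (eq_bigr (fun J =>
  \sum_(I <- pdom Q) (if P J && (e I == J) then pprob Q I else 0))); last first.
  by move=> J _; case: (P J); [rewrite big_mkcond | rewrite big1].
rewrite exchange_big [RHS]big_mkcond; apply: eq_big_seq => I IQ.
rewrite (bigD1_seq (e I)) ?in_imfset ?fset_uniq //= eqxx andbT big1 ?addr0 // => J.
by rewrite eq_sym andbC => /negbTE ->.
Qed.

Lemma prob_all_push s e Q F :
  prob_all (push s e Q) F = \sum_(I <- pdom Q | F `<=` e I) pprob Q I.
Proof. exact: sum_push. Qed.

Lemma pdb_eq_trans Q1 Q2 Q3 : pdb_eq Q1 Q2 -> pdb_eq Q2 Q3 -> pdb_eq Q1 Q3.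
Proof.
case=> s12 d12 p12 [s23 d23 p23]; split; [by rewrite s12 | by rewrite d12 |].
by move=> I I1; rewrite p12 // p23 // -d12.
Qed.

Lemma pdb_eq_push_push s s' e1 e2 e Q : {in pdom Q, e2 \o e1 =1 e} ->
  pdb_eq (push s e2 (push s' e1 Q)) (push s e Q).
Proof.
move=> eq_e; split => //=; first by rewrite -imfset_comp; apply: eq_in_imfset.
move=> J _; rewrite (sum_push s' e1 Q (fun I => e2 I == J)).
rewrite big_seq_cond [RHS]big_seq_cond; apply: eq_bigl => I.
by case: (boolP (I \in _)) => //= /eq_e <-.
Qed.

Lemma pdb_ok_push s e Q : pdb_ok Q -> s != fset0 ->
  {in pdom Q, forall I, instance_over s (e I)} -> pdb_ok (push s e Q).
Proof.
case/and5P => _ /fset0Pn[I0 I0Q] _ /allP ge0 sum1 s0 over; apply/and5P; split => //.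
- by apply/fset0Pn; exists (e I0); apply: in_imfset.
- by apply/allP => J /imfsetP[I IQ ->]; apply: over.
- apply/allP => J _; rewrite /= big_seq_cond.
  by apply: sumr_ge0 => I /andP[/ge0].
- by rewrite (sum_push s e Q xpredT).
Qed.

Definition embed (B : instance) (h : fact -> fact) (I : instance) : instance :=
  B `|` [fset h f | f in I].

Section Embedding.
Variables (B : instance) (h : fact -> fact) (h' : fact -> option fact).
Hypotheses (hK : pcancel h h') (h'K : ocancel h' h) (hB : forall f, h f \notin B).

Lemma in_embed I x : (x \in embed B h I) = oapp (fun f => f \in I) (x \in B) (h' x).
Proof.
rewrite in_fsetU; case hx: (h' x) => [f|] /=.
  by rewrite -(h'K x) hx /= (negbTE (hB f)) (mem_imfset _ _ (pcan_inj hK)).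
case: imfsetP => [[f _ xf]|]; last by rewrite orbF.
by move: hx; rewrite xf hK.
Qed.

Lemma tuple_independent_push_embed s Q :
  \sum_(I <- pdom Q) pprob Q I = 1 -> tuple_independent Q ->
  tuple_independent (push s (embed B h) Q).
Proof.
move=> sum1 TI F; rewrite prob_all_push.
have prob1 x : prob_all (push s (embed B h) Q) [fset x] =
    oapp (fun f => prob_all Q [fset f]) (if x \in B then 1 else 0) (h' x).
  rewrite prob_all_push; under eq_bigl do rewrite fsub1set in_embed.
  case: (h' x) => [f|] /=; first by apply: eq_bigl => I; rewrite fsub1set.
  by case: ifP => _; rewrite ?big_pred0_eq.
rewrite (eq_bigr _ (fun x _ => prob1 x)).
have [/hasP[x xF /andP[/eqP hx xB]]|/hasPn keep] :=
  boolP (has (fun x => (h' x == None) && (x \notin B)) F).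
  rewrite [LHS]big_hasC; last first.
    apply/hasPn => I _; apply/negP => /fsubsetP /(_ x xF).
    by rewrite in_embed hx (negbTE xB).
  by rewrite (bigD1_seq x) ?fset_uniq //= hx (negbTE xB) mul0r.
pose G : {fset fact} := seq_fset tt (pmap h' F).
have subG I : (F `<=` embed B h I) = (G `<=` I).
  apply/fsubsetP/fsubsetP => sub.
    move=> f; rewrite seq_fsetE (can2_mem_pmap h'K hK) => /sub.
    by rewrite in_embed hK.
  move=> x xF; rewrite in_embed; case hx: (h' x) => [f|] /=.
    by apply: sub; rewrite seq_fsetE mem_pmap -hx map_f.
  by move: (keep x xF); rewrite hx eqxx negbK.
rewrite (eq_bigl _ _ subG) -/(prob_all Q G) TI.
rewrite [RHS](eq_big_seq (fun x => oapp (fun f => prob_all Q [fset f]) 1 (h' x))); last first.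
  by move=> x xF; case hx: (h' x) => //=; move: (keep x xF); rewrite hx eqxx negbK => ->.
rewrite -big_pmap; apply: perm_big.
by rewrite (perm_trans (seq_fset_perm _ _)) // undup_id // (pmap_uniq h'K) ?fset_uniq.
Qed.

End Embedding.

End PushForward.

(* [choice.pickle] is qualified: finmap exports an unrelated [pickle]. *)
Definition srel (f : fact) : Defs.rel := (choice.pickle (@inr Defs.rel fact f), 1).

Lemma srel_inj : injective srel.
Proof. by move=> f1 f2 /(congr1 fst) /(pcan_inj choice.pickleK) [->]. Qed.

Definition mark (b : bool) (f : fact) : fact := (srel f, [:: nat_of_bool b]).

Definition unmark (x : fact) : option fact :=
  if (choice.unpickle x.1.1 : option (Defs.rel + fact)) is Some (inr f) then
    if x == mark true f then Some f else None
  else None.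

Lemma markK : pcancel (mark true) unmark.
Proof. by move=> f; rewrite /unmark choice.pickleK eqxx. Qed.

Lemma unmarkK : ocancel unmark (mark true).
Proof.
move=> x; rewrite /unmark; case: (choice.unpickle x.1.1) => [[R|f]|] //=.
by case: eqP.
Qed.

Section Encoding.
Local Open Scope fset_scope.
Local Open Scope nat_scope.
Variables (P : {fset instance}) (V : view).

Definition facts : {fset fact} := \bigcup_(X <- P) X.

Lemma sub_facts X : X \in P -> {subset X <= facts}.
Proof. by move=> XP f fX; apply/bigfcupP; exists X; rewrite ?XP. Qed.

Definition mrel (R : Defs.rel) : Defs.rel :=
  (choice.pickle (@inl Defs.rel fact R), arity R + size facts).

Lemma mrel_inj : injective mrel.
Proof. by move=> R1 R2 /(congr1 fst) /(pcan_inj choice.pickleK) [->]. Qed.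

Lemma mrel_neq_srel R f : mrel R != srel f.
Proof. by apply/eqP => /(congr1 fst) /(pcan_inj choice.pickleK). Qed.

Definition indicator (C : instance) : seq univ := [seq nat_of_bool (f \in C) | f <- facts].

Lemma nth_indicator C f : f \in facts -> nth 0 (indicator C) (index f facts) = (f \in C).
Proof. by move=> ff; rewrite /indicator (nth_map f) ?index_mem // nth_index. Qed.

Definition base : instance :=
  [fset (mrel g.1, g.2 ++ indicator C) | C in P, g in view_app V C] `|`
  [fset mark false f | f in facts].

Definition encode : instance -> instance := embed base (mark true).

Lemma mark_notin_base f : mark true f \notin base.
Proof.
rewrite in_fsetU negb_or; apply/andP; split.
  by apply/imfset2P => -[C _ [g _ [/(pcan_inj choice.pickleK)]]].
by apply/imfsetP => -[g _ [_]].
Qed.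

Lemma in_encode_mark X b f :
  (mark b f \in encode X) = if b then f \in X else f \in facts.
Proof.
rewrite /encode (in_embed markK unmarkK mark_notin_base); case: b; first by rewrite markK.
have -> : unmark (mark false f) = None.
  by rewrite /unmark choice.pickleK; case: eqP => // -[].
rewrite /= in_fsetU; apply/orP/idP => [[|/imfsetP[g gf /(congr1 fst) /srel_inj ->]] //|ff].
  by case/imfset2P => C _ [g _ [/(pcan_inj choice.pickleK)]].
by right; apply: in_imfset.
Qed.

Lemma in_encode_mrel X R a z : size a = arity R ->
  reflect (exists2 C, C \in P & ((R, a) \in view_app V C) && (z == indicator C))
          ((mrel R, a ++ z) \in encode X).
Proof.
move=> sa; rewrite /encode (in_embed markK unmarkK mark_notin_base).
have -> : unmark (mrel R, a ++ z) = None by rewrite /unmark /= choice.pickleK.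
rewrite /= in_fsetU; apply: (iffP orP).
  case=> [/imfset2P[C CP [[R' a'] gV e]]|/imfsetP[f _ /(congr1 fst) /eqP]]; last first.
    by rewrite (negbTE (mrel_neq_srel R f)).
  have eR : R = R' := mrel_inj (congr1 fst e); subst R'.
  have /eqP := congr1 snd e; rewrite /= eqseq_cat; last by rewrite sa (size_view_app gV).
  by case/andP => /eqP ea ze; exists C; rewrite ?ea ?gV.
case=> C CP /andP[aV /eqP ->]; left; apply/imfset2P; exists C => //.
by exists (R, a).
Qed.

Definition query (R : Defs.rel) : formula :=
  foldr Exists
    (foldr And (Atom (mrel R) (map Var (iota 0 (arity R + size facts))))
       [seq Atom (srel f) [:: Var (arity R + index f facts)] | f <- facts])
    (iota (arity R) (size facts)).

Lemma consts_query R : consts (query R) = [::].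
Proof.
have nil_vars s : flatten (map term_const (map Var s)) = [::] by elim: s.
rewrite consts_foldr_Exists consts_foldr_And /= nil_vars cats0 -map_comp.
by elim: (enum_fset facts).
Qed.

Lemma sat_query J R a : size a = arity R ->
  sat_def J (iota 0 (arity R)) (query R) a <->
  exists z, [/\ size z = size facts, all (mem (adom J)) z, (mrel R, a ++ z) \in J &
                {in facts, forall f, (srel f, [:: nth 0 z (index f facts)]) \in J}].
Proof.
move=> sa; rewrite /sat_def consts_query cats0 /query eval_foldr_Exists size_iota -sa.
have eval_body z : size z = size facts ->
    eval J (adom J) (upds (assign (iota 0 (size a)) a) (iota (size a) (size facts)) z)
      (foldr And (Atom (mrel R) (map Var (iota 0 (size a + size facts))))
         [seq Atom (srel f) [:: Var (size a + index f facts)] | f <- facts]) =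
    all (fun f => (srel f, [:: nth 0 z (index f facts)]) \in J) facts &&
    ((mrel R, a ++ z) \in J).
  move=> <-; rewrite (eq_eval _ _ _ (upds_iota_assign a z)) eval_foldr_And all_map /=.
  rewrite -map_comp -size_cat map_nth_iota0 // take_size; congr (_ && _).
  by apply: eq_all => f; rewrite /= nth_cat ltnNge leq_addr addKn.
split=> [[z [sz zA ev]]|[z [sz zA Mz Sz]]]; exists z.
  by move: ev; rewrite eval_body // => /andP[/allP].
by rewrite eval_body // Mz andbT; split => //; apply/allP.
Qed.

Definition enc_view : view := View (out_schema V) (fun R => (iota 0 (arity R), query R)).

Lemma view_app_encode X : X \in P -> view_app enc_view (encode X) = view_app V X.
Proof.
move=> XP; apply/fsetP => -[R a]; rewrite [in LHS]mem_view_app /=.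
case RV: (R \in out_schema V); last by apply/esym/negbTE; rewrite mem_view_app RV.
rewrite consts_query cats0 mem_tuples /=; apply/idP/idP.
  case/andP => /andP[/eqP sa _] /(sat_query _ sa) [z [_ _ Mz Sz]].
  case/(in_encode_mrel _ _ sa): Mz => C CP /andP[aV /eqP ez].
  apply: sub_view_app aV => f fC; have ff := sub_facts CP fC.
  by move: (Sz f ff); rewrite ez nth_indicator // -/(mark (f \in C) f) in_encode_mark fC.
move=> aV; have /= sa := size_view_app aV.
have Ma : (mrel R, a ++ indicator X) \in encode X.
  by apply/(in_encode_mrel _ _ sa); exists X; rewrite ?aV ?eqxx.
have Sa f : f \in facts -> mark (f \in X) f \in encode X.
  by move=> ff; rewrite in_encode_mark; case: ifP.
rewrite sa eqxx /=; apply/andP; split.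
  by apply/allP => u ua; apply/adomP; exists (mrel R, a ++ indicator X); rewrite ?mem_cat ?ua.
apply/(sat_query _ sa); exists (indicator X); split => //.
- by rewrite size_map.
- apply/allP => u /mapP[f ff ->]; apply/adomP.
  by exists (mark (f \in X) f); [exact: Sa | exact: mem_head].
- by move=> f ff; rewrite nth_indicator //; exact: Sa.
Qed.

Definition enc_schema : schema :=
  [fset mrel R | R in out_schema V] `|` [fset srel f | f in facts].

Lemma mrel_in_enc_schema R : R \in out_schema V -> mrel R \in enc_schema.
Proof. by move=> RV; apply/fsetUP; left; apply: in_imfset. Qed.

Lemma srel_in_enc_schema f : f \in facts -> srel f \in enc_schema.
Proof. by move=> ff; apply/fsetUP; right; apply: in_imfset. Qed.

Lemma encode_over X : X \in P -> instance_over enc_schema (encode X).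
Proof.
move=> XP; apply/allP => x; rewrite in_fsetU => /orP[|/imfsetP[f fX ->]]; last first.
  by rewrite /fact_over srel_in_enc_schema ?(sub_facts XP).
rewrite in_fsetU => /orP[/imfset2P[C _ [g gV ->]]|/imfsetP[f ff ->]]; rewrite /fact_over.
  have := gV; rewrite mem_view_app => /andP[gR _].
  by rewrite mrel_in_enc_schema //= size_cat size_map (size_view_app gV) eqxx.
by rewrite srel_in_enc_schema.
Qed.

Lemma view_ok_enc_view : out_schema V != fset0 -> view_ok SJFCQ enc_schema enc_view.
Proof.
move=> V0; apply/andP; split => //; apply/allP => R RV /=.
rewrite size_iota eqxx iota_uniq /=; apply/and3P; split.
- have fv_vars s : flatten (map term_var (map Var s)) = s by elim: s => //= x s ->.
  apply/allP => y; rewrite /query fv_foldr_Exists mem_filter fv_foldr_And /= fv_vars.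
  rewrite -map_comp mem_cat => /andP[yn /orP[/flattenP[s /mapP[f ff ->]]|]].
    by rewrite inE => /eqP yf; move: yn; rewrite yf mem_iota leq_addr ltn_add2l index_mem ff.
  by move: yn; rewrite !mem_iota /= !add0n => + yk; rewrite yk andbT -ltnNge.
- rewrite /query wt_foldr_Exists wt_foldr_And all_map /= size_map size_iota eqxx andbT.
  by rewrite mrel_in_enc_schema // andbT; apply/allP => f ff /=; rewrite srel_in_enc_schema.
- rewrite /query /= has_or_foldr_Exists has_or_foldr_And atom_rels_foldr_Exists.
  rewrite atom_rels_foldr_And /= -map_comp flatten_map1 orbF cat_uniq /= andbT.
  rewrite (map_inj_uniq srel_inj) fset_uniq orbF; apply/andP; split.
    by rewrite has_map; apply/hasPn.
  by apply/mapP => -[f _ /eqP]; rewrite (negbTE (mrel_neq_srel R f)).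
Qed.

End Encoding.

Lemma in_L_TIfin_mono (R : realType) (L1 L2 : lang) (Q : pdb R) :
  (forall phi, in_lang L1 phi -> in_lang L2 phi) ->
  in_L_TIfin L1 Q -> in_L_TIfin L2 Q.
Proof.
move=> sub [T [V [TIT [/andP[V0 /allP okV] eqQ]]]]; exists T, V; split => //; split => //.
apply/andP; split => //; apply/allP => S SV; move: (okV S SV).
by case: (vdef V S) => xs phi /and5P[? ? ? ? /sub ?]; apply/and5P.
Qed.

Lemma in_L_TIfin_SJFCQ (R : realType) (L : lang) (Q : pdb R) :
  in_L_TIfin L Q -> in_L_TIfin SJFCQ Q.
Proof.
case=> T [V [[okT TI] [okV eqQ]]].
have /fset0Pn[R0 R0V] : out_schema V != fset0 by case/andP: okV.
have sum1 : (\sum_(I <- pdom T) pprob T I = 1)%R by case/and5P: okT => _ _ _ _ /eqP.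
exists (push (enc_schema (pdom T) V) (encode (pdom T) V) T), (enc_view (pdom T) V).
split; [split | split].
- apply: pdb_ok_push => //; last exact: encode_over.
  by apply/fset0Pn; exists (mrel (pdom T) R0); apply: mrel_in_enc_schema.
- exact: tuple_independent_push_embed markK unmarkK (mark_notin_base _ _) _ _ sum1 TI.
- by apply: view_ok_enc_view; apply/fset0Pn; exists R0.
- exact: pdb_eq_trans (pdb_eq_push_push _ _ (view_app_encode _)) eqQ.
Qed.

Theorem corollary7p4 (R : realType) (Q : pdb R) :
  (in_L_TIfin SJFCQ Q <-> in_L_TIfin CQ Q) /\
  (in_L_TIfin CQ Q <-> in_L_TIfin UCQ Q).
Proof.
have sjf_cq phi : in_lang SJFCQ phi -> in_lang CQ phi by case/andP.
have cq_ucq phi : in_lang CQ phi -> in_lang UCQ phi by [].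
split; split.
- exact: in_L_TIfin_mono sjf_cq.
- exact: in_L_TIfin_SJFCQ.
- exact: in_L_TIfin_mono cq_ucq.
- by move/in_L_TIfin_SJFCQ; apply: in_L_TIfin_mono sjf_cq.
Qed.
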